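(* Consider the constraint system obtained from (ILP-1) by replacing, in the flow constraints, the one-to-many flows indexed by $b\in\texttt{src}$ with many-to-one flows indexed by $b\in\texttt{snk}$: for all $b\in\texttt{snk}$, $s\in S$, $t$: $F^b_{st}=-\sum_{r\in\texttt{src}}z_{rs0}$ if $t=0$, $F^b_{st}=|\texttt{src}|\,z_{bsT}$ if $t=T$, and $F^b_{st}=0$ otherwise (with the bridge constraints now imposed for $b\in\texttt{snk}$). For any feasible point of this system, defining $s^r_t$ as the unique state with $z_{rs^r_tt}=1$ and $\pi^r=s^r_0\cdots s^r_T$, the $\pi^r$ are mobility paths and for every $i\in\texttt{src}$ and $j\in\texttt{snk}$ there exists an agent-to-agent information path $\bar\pi^{i,j}$ valid with respect to $\{\pi^r\}$.
   Context: A mobility-communication network is $\mathcal N=(S,\rightarrow,\rightsquigarrow)$ with $S$ finite, $\rightarrow\subseteq S\times S$ directed mobility edges, $\rightsquigarrow\subseteq S\times S$ directed communication edges; $C^\mp_\rightarrow(s)$, $C^\mp_\rightsquigarrow(s)$ denote predecessor/successor sets along the respective edges. There are $R$ agents with initial states $s^r_0$, horizon $T\ge1$, and $\texttt{src},\texttt{snk}\subseteq\{1,\dots,R\}$. A mobility path is $s_0\cdots s_T$ with $(s_t,s_{t+1})\in\rightarrow$. An information path is $\mathfrak s^0_0\cdots\mathfrak s^{n_0}_0\mathfrak s^0_1\cdots\mathfrak s^{n_T}_T$ with $(\mathfrak s^i_t,\mathfrak s^{i+1}_t)\in\rightsquigarrow$ for $i<n_t$ and $(\mathfrak s^{n_t}_t,\mathfrak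 s^0_{t+1})\in\rightarrow$ for $t<T$; an agent-to-agent information path $\bar\pi^{i,j}$ starts at $s^i_0$ and ends at $s^j_T$. It is valid w.r.t. mobility paths $\{\pi^r=s^r_0\cdots s^r_T\}$ if $\{\mathfrak s^i_t\}_{i\le n_t}\subseteq\{s^r_t\}_r$ for all $t$ and $(\mathfrak s^{n_t}_t,\mathfrak s^0_{t+1})\in\{(s^r_t,s^r_{t+1})\}_r$ for all $t<T$. Variables: binary $z_{rst}$ ($0\le t\le T$), $x_{rss't}$ ($(s,s')\in\rightarrow$, $t<T$); nonnegative integer $f^b_{ss't}$ ($(s,s')\in\rightarrow$, $t<T$), $\bar f^b_{ss't}$ ($(s,s')\in\rightsquigarrow$, $t\le T$). $F^b_{st}=\sum_{s'\in C^-_\rightarrow(s)}f^b_{s's(t-1)}+\sum_{s'\in C^-_\rightsquigarrow(s)}\bar f^b_{s'st}-\sum_{s'\in C^+_\rightarrow(s)}f^b_{ss't}-\sum_{s'\in C^+_\rightsquigarrow(s)}\bar f^b_{ss't}$ (terms with time $-1$ or mobility time $T$ omitted). With a constant $N\ge R$, the remaining constraints are: $z_{rs0}=1$ iff $s=s^r_0$; $z_{rs(t+1)}=\sum_{s'\in C^-_\rightarrow(s)}x_{rs'st}$ and $z_{rst}=\sum_{s'\in C^+_\rightarrow(s)}x_{rss't}$ for $t<T$; $\bar f^b_{ss't}\le N\sum_rz_{rst}$, $\bar f^b_{ss't}\le N\sum_rz_{rs't}$, $f^b_{ss't}\le N\sum_rx_{rss't}$ for every flow index $b$. *)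

From HB Require Import structures.
From mathcomp Require Import all_boot all_order all_algebra.
Set Implicit Arguments. Unset Strict Implicit. Unset Printing Implicit Defensive.
Import GRing.Theory Num.Theory.

(* Net flow F^b_{st} for one flow index b, given the mobility-edge flows
   f s s' t (meaningful for (s,s') mobility edge, t < T) and the
   communication-edge flows fb s s' t (meaningful for (s,s') comm edge, t <= T).
   Terms with time -1 or mobility time T are omitted. *)
Definition netflow (S : finType) (mob comm : rel S) (T : nat)
    (f fb : S -> S -> nat -> nat) (s : S) (t : nat) : int :=
  ((if (0 < t)%N then \sum_(s' | mob s' s) (f s' s t.-1)%:Z else 0)
   + \sum_(s' | comm s' s) (fb s' s t)%:Z
   - (if (t < T)%N then \sum_(s' | mob s s') (f s s' t)%:Z else 0)
   - \sum_(s' | comm s s') (fb s s' t)%:Z)%R.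

Definition mobility_path (S : finType) (mob : rel S) (T : nat) (pi : nat -> S) :=
  forall t, (t < T)%N -> mob (pi t) (pi t.+1).

(* An information path: for each t <= T a nonempty segment
   a t :: l t = s^0_t ... s^{n_t}_t, consecutive states along comm edges,
   and (s^{n_t}_t, s^0_{t+1}) a mobility edge for t < T. *)
Definition info_path (S : finType) (mob comm : rel S) (T : nat)
    (a : nat -> S) (l : nat -> seq S) :=
  (forall t, (t <= T)%N -> path comm (a t) (l t)) /\
  (forall t, (t < T)%N -> mob (last (a t) (l t)) (a t.+1)).

Definition agent_info_path (S : finType) (mob comm : rel S) (T R : nat)
    (pi : 'I_R -> nat -> S) (i j : 'I_R) (a : nat -> S) (l : nat -> seq S) :=
  info_path mob comm T a l /\ a 0%N = pi i 0%N /\ last (a T) (l T) = pi j T.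

Definition valid_info_path (S : finType) (T R : nat) (pi : 'I_R -> nat -> S)
    (a : nat -> S) (l : nat -> seq S) :=
  (forall t, (t <= T)%N -> forall s, s \in a t :: l t -> exists r, s = pi r t) /\
  (forall t, (t < T)%N -> exists r,
      last (a t) (l t) = pi r t /\ a t.+1 = pi r t.+1).

From HB Require Import structures.
From mathcomp Require Import all_boot all_order all_algebra.
Import Order.TTheory GRing.Theory Num.Theory.
From mathcomp Require Import ring boolp.

(* Each z_{r,.,t} sums to one (the x-flow conserves it), so it is the
   indicator of a single state s^r_t, and x moves agents only along their paths.
   For i in src and j in snk, let X be the set of time-expanded states (s, t)
   reached from s^i_0 by a valid prefix of an information path.  By the bridge
   constraints every edge carrying positive j-flow joins occupied states along
   an agent's move, so X is closed under positive j-flow, and summing the flow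
   balance F^j over X gives a nonnegative number (only inflow from outside X
   survives).  The flow constraints evaluate the same sum as minus the supply
   of X at time 0 (at least 1, since s^i_0 is in X) plus |src| z_{j,s,T} summed
   over X at time T, so X contains s^j_T. *)

Set Implicit Arguments. Unset Strict Implicit.
Local Open Scope ring_scope.

Lemma sum_inflow_sub_outflow_ge0 (R : numDomainType) (S : finType) (E : rel S)
    (g : S -> S -> R) (p q : S -> R) :
  (forall a b, E a b -> 0 <= (q b - p a) * g a b) ->
  0 <= \sum_s q s * \sum_(s' | E s' s) g s' s
       - \sum_s p s * \sum_(s' | E s s') g s s'.
Proof.
move=> edge_ge0.
under eq_bigr do rewrite mulr_sumr.
under [X in _ - X]eq_bigr do rewrite mulr_sumr.
rewrite [X in _ - X](exchange_big_dep xpredT) //= -sumrB.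
apply: sumr_ge0 => s _; rewrite -sumrB; apply: sumr_ge0 => s' Es's.
by rewrite -mulrBl; apply: edge_ge0.
Qed.

Section ClosedSetFlow.

Variables (S : finType) (mob comm : rel S) (T : nat) (f fb : S -> S -> nat -> nat).
Variable X : S -> nat -> bool.

Hypothesis X_comm_closed : forall s s' t, (t <= T)%N -> X s t -> comm s s' ->
  (0 < fb s s' t)%N -> X s' t.
Hypothesis X_mob_closed : forall s s' t, (t < T)%N -> X s t -> mob s s' ->
  (0 < f s s' t)%N -> X s' t.+1.

Let I s t : int := (X s t)%:R.

Lemma netflow_closed_set_ge0 :
  0 <= \sum_(0 <= t < T.+1) \sum_s I s t * netflow mob comm T f fb s t.
Proof.
pose mob_in s t : int := \sum_(s' | mob s' s) (f s' s t)%:Z.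
pose mob_out s t : int := \sum_(s' | mob s s') (f s s' t)%:Z.
pose comm_in s t : int := \sum_(s' | comm s' s) (fb s' s t)%:Z.
pose comm_out s t : int := \sum_(s' | comm s s') (fb s s' t)%:Z.
have mob_telescope :
    \sum_(0 <= t < T.+1)
      (\sum_s I s t * (if (0 < t)%N then mob_in s t.-1 else 0)
       - \sum_s I s t * (if (t < T)%N then mob_out s t else 0))
    = \sum_(0 <= t < T) (\sum_s I s t.+1 * mob_in s t - \sum_s I s t * mob_out s t).
  rewrite !sumrB big_nat_recl // big_nat_recr //= ltnn.
  rewrite [\sum_s I s 0 * _]big1 => [|s _]; last by rewrite mulr0.
  rewrite [\sum_s I s T * _]big1 => [|s _]; last by rewrite mulr0.
  rewrite add0r addr0.
  by congr (_ - _); apply: eq_big_nat => t /andP[_ ->].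
have -> : \sum_(0 <= t < T.+1) \sum_s I s t * netflow mob comm T f fb s t =
    \sum_(0 <= t < T.+1)
      (\sum_s I s t * (if (0 < t)%N then mob_in s t.-1 else 0)
       - \sum_s I s t * (if (t < T)%N then mob_out s t else 0))
  + \sum_(0 <= t < T.+1) (\sum_s I s t * comm_in s t - \sum_s I s t * comm_out s t).
  rewrite -big_split; apply: eq_bigr => t _ /=.
  rewrite -!sumrB -big_split; apply: eq_bigr => s _ /=.
  rewrite /netflow; ring.
rewrite mob_telescope.
(* A term of either cut sum is negative only on an edge leaving X, and such an
   edge carries no flow. *)
apply: addr_ge0; rewrite big_nat_cond; apply: sumr_ge0 => t /andP[/andP[_ Ht] _].
- apply: sum_inflow_sub_outflow_ge0 => a b mob_ab; rewrite /I.
  case Xa: (X a t); case Xb: (X b t.+1); rewrite ?subrr ?mul0r ?subr0 ?mul1r //.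
  have [->|fpos] := posnP (f a b t); first by rewrite mulr0.
  by rewrite (X_mob_closed Ht Xa mob_ab fpos) in Xb.
- apply: sum_inflow_sub_outflow_ge0 => a b comm_ab; rewrite /I.
  case Xa: (X a t); case Xb: (X b t); rewrite ?subrr ?mul0r ?subr0 ?mul1r //.
  have [->|fpos] := posnP (fb a b t); first by rewrite mulr0.
  by rewrite (X_comm_closed Ht Xa comm_ab fpos) in Xb.
Qed.

Lemma closed_set_meets_demand (supply demand : S -> nat) (s : S) :
  (forall s t, (t <= T)%N -> netflow mob comm T f fb s t =
     if t == 0%N then - (supply s)%:Z else if t == T then (demand s)%:Z else 0) ->
  X s 0 -> (0 < supply s)%N -> [exists s', X s' T && (0 < demand s')%N].
Proof.
move=> netflowE X0s supply_pos; apply/contraT; rewrite negb_exists => /forallP no_demand.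
have := netflow_closed_set_ge0; rewrite leNgt => /negbTE <-.
rewrite big_nat_recl // big_nat_cond [X in _ + X]big1 ?addr0 => [|t /andP[/andP[_ Ht] _]].
  under eq_bigr do rewrite netflowE //= mulrN.
  rewrite sumrN oppr_lt0 (bigD1 s) //= /I X0s mul1r.
  by apply: ltr_wpDr; [apply: sumr_ge0 => s' _; apply: mulr_ge0 | rewrite ltz_nat].
apply: big1 => s' _; rewrite netflowE //=; case: eqP => [tT|_]; last by rewrite mulr0.
have := no_demand s'; rewrite -tT /I; case: (X s' t.+1) => //=.
by rewrite -leqNgt leqn0 => /eqP ->; rewrite mulr0.
Qed.

End ClosedSetFlow.

Section AgentStates.

Variables (S : finType) (mob : rel S) (R : nat) (s0 : 'I_R -> S) (T : nat).
Variables (z : 'I_R -> S -> nat -> bool) (x : 'I_R -> S -> S -> nat -> bool).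

Hypothesis z_init : forall r s, z r s 0 = (s == s0 r).
Hypothesis z_in : forall r s t, (t < T)%N ->
  (z r s t.+1 : nat) = \sum_(s' | mob s' s) (x r s' s t : nat).
Hypothesis z_out : forall r s t, (t < T)%N ->
  (z r s t : nat) = \sum_(s' | mob s s') (x r s s' t : nat).

Lemma sum_z_eq1 r t : (t <= T)%N -> (\sum_s (z r s t : nat) = 1)%N.
Proof.
elim: t => [|t IHt] tT.
  rewrite (bigD1 (s0 r)) //= z_init eqxx big1 // => s.
  by rewrite z_init => /negbTE ->.
under eq_bigr do rewrite z_in //.
by rewrite (exchange_big_dep xpredT) //= -(IHt (ltnW tT)); apply: eq_bigr => s _; rewrite z_out.
Qed.

Definition agent_state r t := odflt (s0 r) [pick s | z r s t].

Lemma z_agent_state r t s : (t <= T)%N -> z r s t = (s == agent_state r t).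
Proof.
move=> tT; have := sum_z_eq1 r tT; rewrite /agent_state.
case: pickP => [s1 zs1 | no_state] /=; last by rewrite big1 // => s' _; rewrite no_state.
move=> sum1; apply/idP/eqP => [zs|->//]; apply/eqP; apply: contra_eqT sum1 => s_neq.
by rewrite (bigD1 s1) //= (bigD1 s) ?s_neq //= zs1 zs addnA.
Qed.

Lemma x_agent_state r s s' t : (t < T)%N -> mob s s' -> x r s s' t ->
  s = agent_state r t /\ s' = agent_state r t.+1.
Proof.
move=> tT mob_ss' xss'; split; apply/eqP; rewrite -z_agent_state ?(ltnW tT) //.
  by rewrite -[z _ _ _]lt0b z_out // (bigD1 s') //= xss'.
by rewrite -[z _ _ _]lt0b z_in // (bigD1 s) //= xss'.
Qed.

Lemma agent_state_mobility_path r : mobility_path mob T (agent_state r).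
Proof.
move=> t tT; have := z_agent_state r (agent_state r t) (ltnW tT).
rewrite eqxx => /(congr1 nat_of_bool); rewrite z_out //=.
case: (pickP (fun s' => mob (agent_state r t) s' && x r (agent_state r t) s' t)).
  by move=> s' /andP[mob_s' x_s']; have [_ <-] := x_agent_state tT mob_s' x_s'.
by move=> no_move; rewrite big1 // => s' mob_s'; have := no_move s'; rewrite mob_s' => /= ->.
Qed.

Lemma occupied_of_sum_z_gt0 s t : (t <= T)%N ->
  (0 < \sum_r (z r s t : nat))%N -> exists r, s = agent_state r t.
Proof.
move=> tT; case: (pickP (z ^~ s ^~ t)) => [r zr | none]; last by rewrite big1 // => r _; rewrite none.
by exists r; apply/eqP; rewrite -z_agent_state.
Qed.

Lemma traversed_of_sum_x_gt0 s s' t : (t < T)%N -> mob s s' ->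
  (0 < \sum_r (x r s s' t : nat))%N ->
  exists r, s = agent_state r t /\ s' = agent_state r t.+1.
Proof.
move=> tT mob_ss'; case: (pickP (fun r => x r s s' t)) => [r xr | none].
  by exists r; apply: x_agent_state.
by rewrite big1 // => r _; rewrite none.
Qed.

End AgentStates.

Section Reachability.

Variables (S : finType) (mob comm : rel S) (R : nat) (pi : 'I_R -> nat -> S) (i : 'I_R).

Definition reachable (s : S) (t : nat) := exists a l,
  [/\ info_path mob comm t a l, a 0 = pi i 0, last (a t) (l t) = s
    & valid_info_path t pi a l].

Lemma reachable_start : reachable (pi i 0) 0.
Proof.
exists (fun=> pi i 0), (fun=> [::]); split=> //; split=> // t.
by rewrite leqn0 => /eqP -> s; rewrite inE => /eqP ->; exists i.
Qed.

Lemma reachable_comm s s' t : reachable s t -> comm s s' ->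
  (exists r, s' = pi r t) -> reachable s' t.
Proof.
move=> [a [l [[comm_l mob_l] a0 last_s [valid_l valid_mob]]]] comm_ss' s'_occ.
exists a, (fun u => if u == t then rcons (l t) s' else l u); split=> //.
- split=> u u_le; last by rewrite ltn_eqF //; apply: mob_l.
  case: eqP => [->|_]; last exact: comm_l.
  by rewrite rcons_path comm_l //= last_s.
- by rewrite eqxx last_rcons.
- split=> u u_le; last by rewrite ltn_eqF //; apply: valid_mob.
  case: eqP => [->|_]; last exact: valid_l.
  move=> v; rewrite -rcons_cons mem_rcons inE => /predU1P[->|]; first exact: s'_occ.
  exact: valid_l.
Qed.

Lemma reachable_mob s s' t : reachable s t -> mob s s' ->
  (exists r, s = pi r t /\ s' = pi r t.+1) -> reachable s' t.+1.
Proof.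
move=> [a [l [[comm_l mob_l] a0 last_s [valid_l valid_mob]]]] mob_ss' [r [s_r s'_r]].
exists (fun u => if u == t.+1 then s' else a u),
       (fun u => if u == t.+1 then [::] else l u); split=> //.
- split=> u u_le.
  + case: eqVneq => [//|u_neq]; apply: comm_l.
    by rewrite -ltnS ltn_neqAle u_neq.
  + rewrite (ltn_eqF u_le) eqSS; case: eqVneq => [->|u_neq]; first by rewrite last_s.
    by apply: mob_l; rewrite ltn_neqAle u_neq -ltnS.
- by rewrite eqxx.
- split=> u u_le.
  + case: eqVneq => [-> v|u_neq]; first by rewrite inE => /eqP ->; exists r.
    by apply: valid_l; rewrite -ltnS ltn_neqAle u_neq.
  + rewrite (ltn_eqF u_le) eqSS; case: eqVneq => [->|u_neq]; first by exists r; rewrite last_s.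
    by apply: valid_mob; rewrite ltn_neqAle u_neq -ltnS.
Qed.

End Reachability.

Unset Implicit Arguments. Set Strict Implicit.
Local Close Scope ring_scope.

Theorem mainTheorem3 (S : finType) (mob comm : rel S) (R : nat)
  (s0 : 'I_R -> S) (T : nat) (src snk : {set 'I_R}) (N : nat)
  (z : 'I_R -> S -> nat -> bool)
  (x : 'I_R -> S -> S -> nat -> bool)
  (f : 'I_R -> S -> S -> nat -> nat)
  (fb : 'I_R -> S -> S -> nat -> nat) :
  (1 <= T)%N ->
  (R <= N)%N ->
  (forall r s, z r s 0%N = (s == s0 r)) ->
  (forall r s t, (t < T)%N ->
     (z r s t.+1 : nat) = \sum_(s' | mob s' s) (x r s' s t : nat)) ->
  (forall r s t, (t < T)%N ->
     (z r s t : nat) = \sum_(s' | mob s s') (x r s s' t : nat)) ->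
  (forall b, b \in snk -> forall s s' t, comm s s' -> (t <= T)%N ->
     (fb b s s' t <= N * \sum_r (z r s t : nat))%N) ->
  (forall b, b \in snk -> forall s s' t, comm s s' -> (t <= T)%N ->
     (fb b s s' t <= N * \sum_r (z r s' t : nat))%N) ->
  (forall b, b \in snk -> forall s s' t, mob s s' -> (t < T)%N ->
     (f b s s' t <= N * \sum_r (x r s s' t : nat))%N) ->
  (forall b, b \in snk -> forall s t, (t <= T)%N ->
     netflow mob comm T (f b) (fb b) s t =
       (if t == 0%N then - (\sum_(r in src) (z r s 0%N : nat))%:Z
        else if t == T then (#|src| * z b s T)%:Z
        else 0)%R) ->
  exists pi : 'I_R -> nat -> S,
    (forall r t, (t <= T)%N -> forall s, z r s t = (s == pi r t)) /\
    (forall r, mobility_path mob T (pi r)) /\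
    (forall i j, i \in src -> j \in snk ->
       exists (a : nat -> S) (l : nat -> seq S),
         agent_info_path mob comm T pi i j a l /\ valid_info_path T pi a l).
Proof.
move=> _ _ z_init z_in z_out _ bridge_in bridge_mob flow.
pose pi := agent_state s0 z.
have zE := z_agent_state z_init z_in z_out.
exists pi; split; first by move=> r t tT s; apply: zE.
split; first exact: agent_state_mobility_path z_init z_in z_out.
move=> i j i_src j_snk.
pose X s t := (t <= T) && `[< reachable mob comm pi i s t >].
have X_comm s s' t : t <= T -> X s t -> comm s s' -> 0 < fb j s s' t -> X s' t.
  move=> tT /andP[_ /asboolP reach_s] comm_ss' fb_pos; rewrite /X tT; apply/asboolP.
  apply: (reachable_comm reach_s comm_ss'); apply: (occupied_of_sum_z_gt0 z_init z_in z_out tT).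
  by move: (leq_trans fb_pos (bridge_in j j_snk s s' t comm_ss' tT)); rewrite muln_gt0 => /andP[].
have X_mob s s' t : t < T -> X s t -> mob s s' -> 0 < f j s s' t -> X s' t.+1.
  move=> tT /andP[_ /asboolP reach_s] mob_ss' f_pos; rewrite /X tT; apply/asboolP.
  apply: (reachable_mob reach_s mob_ss'); apply: (traversed_of_sum_x_gt0 z_init z_in z_out tT mob_ss').
  by move: (leq_trans f_pos (bridge_mob j j_snk s s' t mob_ss' tT)); rewrite muln_gt0 => /andP[].
have X_start : X (pi i 0) 0 by rewrite /X leq0n; apply/asboolP; apply: reachable_start.
have supply_pos : 0 < \sum_(r in src) (z r (pi i 0) 0 : nat).
  by rewrite (bigD1 i) //= zE // eqxx.
have /existsP[s /andP[/andP[_ /asboolP reach_s] demand_pos]] :=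
  closed_set_meets_demand X_comm X_mob (flow j j_snk) X_start supply_pos.
have s_pi : s = pi j T.
  by move: demand_pos; rewrite muln_gt0 lt0b => /andP[_ zs]; apply/eqP; rewrite -zE.
by case: reach_s => a [l [path_al a0 last_al valid_al]]; exists a, l; rewrite /agent_info_path -s_pi.
Qed.
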